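(* Let $\Theta=(\theta_1,\dots,\theta_N)$ be a realisation of a Kuramoto stochastic block model (real-valued lifted phases) which is in synchronized steady state by time $t_{SS}$, let $\omega$ denote the common frequency $\dot\theta_i(t)$ for $t\ge t_{SS}$, and let $\Delta\theta_i=\theta_i(t_{SS})$. Let $e^{\imath\Theta}$ denote the complex path $t\mapsto(e^{\imath\theta_1(t)},\dots,e^{\imath\theta_N(t)})$. Then for every $T>0$, $M\ge 1$ and $I=(i_1,\dots,i_M)\in[N]^M$, $$S^{SS}_I(e^{\imath\Theta})(T)=\frac{\lambda_I}{M!}\left(e^{\imath\omega T}-1\right)^M,\qquad \lambda_I=e^{\imath\sum_{k=1}^M\Delta\theta_{i_k}},$$ and for all $i,j\in[N]$, $L^{SS}_{ij}(e^{\imath\Theta})(T)=0$.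
   Context: A Kuramoto stochastic block model (KSBM) realisation is a solution of $\dot\theta_i=\omega_i+\sum_j\widetilde C_{ij}\sin(\theta_j-\theta_i)$, $i\in[N]$, where the coupling matrix $\widetilde C$ is obtained from a stochastic block model adjacency matrix and the intrinsic frequencies $\omega_i$ are real numbers; phases are lifted to $\mathbb{R}$. The system is in synchronized steady state by time $t_{SS}$ if $\dot\theta_i(t)=\dot\theta_j(t)$ for all $i,j$ and all $t\ge t_{SS}$; this common value does not depend on $t$ and is denoted $\omega$, so that $\theta_i(t)=\omega(t-t_{SS})+\Delta\theta_i$ for $t\ge t_{SS}$. For a piecewise smooth path $\gamma:[a,b]\to\mathbb{C}^N$ and $I=(i_1,\dots,i_M)$, the path signature is $S_I(\gamma)=\int_{a<t_1<\dots<t_M<b}\dot\gamma_{i_1}(t_1)\cdots\dot\gamma_{i_M}(t_M)\,dt_1\cdots dt_M$; the lead matrix is $L_{ij}(\gamma)=\frac12(S_{(i,j)}(\gamma)-S_{(j,i)}(\gamma))$. Steady-state versions: $S^{SS}_I(\gamma)(T)=S_I(\gamma|_{[t_{SS},t_{SS}+T]})$, $L^{SS}_{ij}(\gamma)(T)=L_{ij}(\gamma|_{[t_{SS},t_{SS}+T]})$. *)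

From Stdlib Require Import Reals List Factorial.
From Coquelicot Require Import Coquelicot.
Open Scope R_scope.

Definition expi (x : R) : C := (cos x, sin x).

(* A path in C^N is a family of complex-valued functions of time,
   indexed by nat (only indices < N are used). *)
Definition cpath := nat -> R -> C.

Definition Cderiv (f : R -> C) (t : R) : C :=
  (Derive (fun s => fst (f s)) t, Derive (fun s => snd (f s)) t).

(* Iterated integral indexed by a REVERSED word:
   sig_rev g a [] t = 1,
   sig_rev g a (i :: l) t = \int_a^t sig_rev g a l s * g_i'(s) ds. *)
Fixpoint sig_rev (g : cpath) (a : R) (l : list nat) (t : R) : C :=
  match l with
  | nil => RtoC 1
  | i :: l' =>
      RInt (V := C_R_CompleteNormedModule)
        (fun s => Cmult (sig_rev g a l' s) (Cderiv (g i) s)) a t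
  end.

(* Path signature S_I(g|_[a,b]) for the word I = (i_1,...,i_M):
   \int_{a<t_1<...<t_M<b} g'_{i_1}(t_1) ... g'_{i_M}(t_M). *)
Definition signature (g : cpath) (a b : R) (I : list nat) : C :=
  sig_rev g a (rev I) b.

Definition lead (g : cpath) (a b : R) (i j : nat) : C :=
  Cmult (RtoC (/2)) (Cminus (signature g a b (i :: j :: nil))
                            (signature g a b (j :: i :: nil))).

Definition sig_SS (g : cpath) (tSS T : R) (I : list nat) : C :=
  signature g tSS (tSS + T) I.
Definition lead_SS (g : cpath) (tSS T : R) (i j : nat) : C :=
  lead g tSS (tSS + T) i j.

Definition kuramoto_solution (N : nat) (Cm : nat -> nat -> R) (w : nat -> R)
  (theta : nat -> R -> R) : Prop :=
  forall i t, (i < N)%nat ->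
    is_derive (theta i) t
      (w i + sum_f_R0 (fun j => Cm i j * sin (theta j t - theta i t)) (pred N)).

Definition sync_by (N : nat) (theta : nat -> R -> R) (tSS : R) : Prop :=
  forall i j t, (i < N)%nat -> (j < N)%nat -> tSS <= t ->
    Derive (theta i) t = Derive (theta j) t.

Definition expi_path (theta : nat -> R -> R) : cpath :=
  fun i t => expi (theta i t).

Definition lambdaI (dtheta : nat -> R) (I : list nat) : C :=
  expi (fold_right Rplus 0 (map dtheta I)).

From Stdlib Require Import Reals List Factorial Lra Lia.
From Coquelicot Require Import Coquelicot.
Open Scope R_scope.

(** After [tSS] the phase differences are frozen, because their derivatives vanish; the
    Kuramoto right-hand side then no longer depends on time, so every phase is
    [theta_i tSS + omega (t - tSS)] and every component of [e^{i Theta}] is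
    [e^{i theta_i tSS}] times the single path [E(s) = e^{i omega (s - tSS)}].  For a path
    whose components are scalar multiples [c_i E] the iterated integrals are computed
    by induction on the word: the [M]-fold integral is [(prod c_i) (E - E(tSS))^M / M!],
    since [d/ds (E - 1)^(M+1) / (M+1) = (E - 1)^M E'].  This is symmetric in the
    letters, so the lead matrix vanishes. *)

Lemma is_derive_eq (f : R -> R) x d d' : is_derive f x d -> d = d' -> is_derive f x d'.
Proof. now intros H <-. Qed.

Definition is_derive_C (f : R -> C) (x : R) (df : C) : Prop :=
  is_derive (fun s => fst (f s)) x (fst df) /\ is_derive (fun s => snd (f s)) x (snd df).

Lemma is_derive_C_eq f x df df' : is_derive_C f x df -> df = df' -> is_derive_C f x df'.
Proof. now intros H <-. Qed.

Lemma is_derive_C_unique f x df : is_derive_C f x df -> Cderiv f x = df.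
Proof.
  intros [H1 H2]; apply injective_projections; apply is_derive_unique; assumption.
Qed.

Lemma is_derive_C_continuous f x df : is_derive_C f x df ->
  continuous (fun s => fst (f s)) x /\ continuous (fun s => snd (f s)) x.
Proof.
  intros [H1 H2]; split;
    apply (ex_derive_continuous (K := R_AbsRing) (V := R_NormedModule)); eexists; eauto.
Qed.

Lemma is_derive_C_const (c : C) x : is_derive_C (fun _ => c) x (RtoC 0).
Proof. split; apply (is_derive_const (K := R_AbsRing) (V := R_NormedModule)). Qed.

Lemma is_derive_C_mult f g x df dg : is_derive_C f x df -> is_derive_C g x dg ->
  is_derive_C (fun s => Cmult (f s) (g s)) x (Cplus (Cmult df (g x)) (Cmult (f x) dg)).
Proof.
  intros [F1 F2] [G1 G2].
  assert (Hmult : forall (u v : R -> R) (du dv : R), is_derive u x du -> is_derive v x dv ->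
            is_derive (fun s => u s * v s) x (du * v x + u x * dv)).
  { intros u v du dv Hu Hv.
    apply (is_derive_mult (K := R_AbsRing)); auto; intros; apply Rmult_comm. }
  split; simpl.
  - eapply is_derive_eq.
    + apply (is_derive_minus (K := R_AbsRing) (V := R_NormedModule)); apply Hmult; eauto.
    + cbv beta; unfold minus, plus, opp; simpl; ring.
  - eapply is_derive_eq.
    + apply (is_derive_plus (K := R_AbsRing) (V := R_NormedModule)); apply Hmult; eauto.
    + cbv beta; unfold plus; simpl; ring.
Qed.

Lemma is_derive_C_minus f g x df dg : is_derive_C f x df -> is_derive_C g x dg ->
  is_derive_C (fun s => Cminus (f s) (g s)) x (Cminus df dg).
Proof.
  intros [F1 F2] [G1 G2]; split; simpl;
    apply (is_derive_minus (K := R_AbsRing) (V := R_NormedModule)); auto.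
Qed.

Lemma is_derive_C_pow f x df n : is_derive_C f x df ->
  is_derive_C (fun s => pow_n (f s) n) x
    (Cmult (Cmult (RtoC (INR n)) (pow_n (f x) (pred n))) df).
Proof.
  intro Hf; induction n as [|n IH].
  - replace (Cmult _ df) with (RtoC 0) by (apply injective_projections; simpl; ring).
    exact (is_derive_C_const (RtoC 1) x).
  - pose proof (is_derive_C_mult _ _ _ _ _ Hf IH) as H.
    replace (Cmult (Cmult (RtoC (INR (S n))) (pow_n (f x) (pred (S n)))) df)
      with (Cplus (Cmult df (pow_n (f x) n))
                  (Cmult (f x) (Cmult (Cmult (RtoC (INR n)) (pow_n (f x) (pred n))) df))).
    + exact H.
    + destruct n as [|n].
      * simpl pred; change (INR 0) with 0; change (INR 1) with 1; cbn [pow_n]; ring.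
      * rewrite (S_INR (S n)), RtoC_plus; simpl pred.
        change (pow_n (f x) (S n)) with (Cmult (f x) (pow_n (f x) n)); ring.
Qed.

Lemma is_derive_C_expi f x df : is_derive f x df ->
  is_derive_C (fun s => expi (f s)) x (Cmult ((0, df) : C) (expi (f x))).
Proof.
  intro Hf; unfold expi; split; simpl; eapply is_derive_eq.
  - apply (is_derive_comp (K := R_AbsRing) (V := R_NormedModule) cos f);
      [apply is_derive_cos | exact Hf].
  - unfold scal; simpl; unfold mult; simpl; ring.
  - apply (is_derive_comp (K := R_AbsRing) (V := R_NormedModule) sin f);
      [apply is_derive_sin | exact Hf].
  - unfold scal; simpl; unfold mult; simpl; ring.
Qed.

Lemma is_derive_C_rotation (om a x : R) :
  is_derive_C (fun s => expi (om * (s - a))) x (Cmult ((0, om) : C) (expi (om * (x - a)))).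
Proof.
  apply (is_derive_C_expi (fun s => om * (s - a))).
  auto_derive; [exact I | ring].
Qed.

Lemma RInt_C_derive (F f : R -> C) a b :
  (forall x, Rmin a b <= x <= Rmax a b -> is_derive_C F x (f x)) ->
  (forall x, Rmin a b <= x <= Rmax a b ->
     continuous (fun s => fst (f s)) x /\ continuous (fun s => snd (f s)) x) ->
  RInt (V := C_R_CompleteNormedModule) f a b = Cminus (F b) (F a).
Proof.
  intros HF Hf; apply is_RInt_unique.
  replace (Cminus (F b) (F a)) with ((fst (F b) - fst (F a), snd (F b) - snd (F a)) : C)
    by (apply injective_projections; simpl; ring).
  apply (is_RInt_fct_extend_pair (U := R_NormedModule) (V := R_NormedModule)).
  - apply (is_RInt_derive (V := R_CompleteNormedModule) (fun s => fst (F s)));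
      intros x Hx; [apply HF | apply Hf]; exact Hx.
  - apply (is_RInt_derive (V := R_CompleteNormedModule) (fun s => snd (F s)));
      intros x Hx; [apply HF | apply Hf]; exact Hx.
Qed.

Lemma expi_plus x y : expi (x + y) = Cmult (expi x) (expi y).
Proof. unfold expi; rewrite cos_plus, sin_plus; apply injective_projections; simpl; ring. Qed.

Lemma expi_0 : expi 0 = RtoC 1.
Proof. unfold expi; rewrite cos_0, sin_0; reflexivity. Qed.

Lemma expi_fold_sum (D : nat -> R) (l : list nat) :
  expi (fold_right Rplus 0 (map D l)) = fold_right Cmult (RtoC 1) (map (fun i => expi (D i)) l).
Proof.
  induction l as [|i l IH]; simpl; [apply expi_0 |].
  now rewrite expi_plus, IH.
Qed.

Lemma RtoC_INR_neq0 n : n <> 0%nat -> RtoC (INR n) <> RtoC 0.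
Proof. intros Hn H; apply RtoC_inj in H; exact (not_0_INR n Hn H). Qed.

Lemma fold_right_Cmult_rev (z : C) (l : list C) :
  fold_right Cmult z (rev l) = Cmult z (fold_right Cmult (RtoC 1) l).
Proof.
  revert z; induction l as [|x l IH]; intro z; simpl; [ring |].
  rewrite fold_right_app, IH; simpl; ring.
Qed.

Lemma sig_rev_rotation (g : cpath) (a om : R) (c : nat -> C) (l : list nat) :
  (forall i, In i l -> forall s, a <= s ->
     Cderiv (g i) s = Cmult (c i) (Cmult ((0, om) : C) (expi (om * (s - a))))) ->
  forall t, a <= t ->
  sig_rev g a l t =
  Cmult (Cdiv (fold_right Cmult (RtoC 1) (map c l)) (RtoC (INR (fact (length l)))))
        (pow_n (Cminus (expi (om * (t - a))) (RtoC 1)) (length l)).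
Proof.
  set (E s := expi (om * (s - a))).
  induction l as [|i l IH]; intros Hg t Ht.
  - simpl; change (INR 1) with 1; change (@one C_Ring) with (RtoC 1); field.
  - cbn [sig_rev map fold_right length].
    set (m := length l).
    set (K := Cdiv (fold_right Cmult (RtoC 1) (map c l)) (RtoC (INR (fact m)))).
    set (F s := Cmult (Cdiv (Cmult K (c i)) (RtoC (INR (S m))))
                      (pow_n (Cminus (E s) (RtoC 1)) (S m))).
    set (dF s := Cmult (Cmult K (pow_n (Cminus (E s) (RtoC 1)) m))
                       (Cmult (c i) (Cmult ((0, om) : C) (E s)))).
    assert (HF : forall x, is_derive_C F x (dF x)).
    { intro x; eapply is_derive_C_eq.
      - apply is_derive_C_mult; [apply is_derive_C_const |].
        apply is_derive_C_pow, is_derive_C_minus;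
          [apply is_derive_C_rotation | apply is_derive_C_const].
      - unfold dF, E; cbn [pred]; field; apply RtoC_INR_neq0; discriminate. }
    assert (HdF : forall x, exists d, is_derive_C dF x d).
    { intro x; eexists; apply is_derive_C_mult.
      - apply is_derive_C_mult; [apply is_derive_C_const |].
        apply is_derive_C_pow, is_derive_C_minus;
          [apply is_derive_C_rotation | apply is_derive_C_const].
      - apply is_derive_C_mult; [apply is_derive_C_const |].
        apply is_derive_C_mult; [apply is_derive_C_const | apply is_derive_C_rotation]. }
    rewrite (RInt_ext (V := C_R_CompleteNormedModule) _ dF).
    2:{ intros x Hx; rewrite Rmin_left, Rmax_right in Hx by lra.
        unfold dF, K, m, E; rewrite IH, Hg; [reflexivity | now left | lra | | lra].
        intros j Hj; apply Hg; now right. }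
    rewrite (RInt_C_derive F).
    + unfold F, E; replace (om * (a - a)) with 0 by ring; rewrite expi_0.
      change (fact (S m)) with (S m * fact m)%nat; rewrite mult_INR, RtoC_mult.
      cbn [pow_n]; unfold K; change (@mult C_Ring) with Cmult; field.
      split; apply RtoC_INR_neq0; [apply fact_neq_0 | discriminate].
    + intros x _; apply HF.
    + intros x _; destruct (HdF x) as [d Hd]; exact (is_derive_C_continuous _ _ _ Hd).
Qed.

Lemma signature_rotation (g : cpath) (a om : R) (c : nat -> C) (I : list nat) (t : R) :
  (forall i, In i I -> forall s, a <= s ->
     Cderiv (g i) s = Cmult (c i) (Cmult ((0, om) : C) (expi (om * (s - a))))) ->
  a <= t ->
  signature g a t I =
  Cmult (Cdiv (fold_right Cmult (RtoC 1) (map c I)) (RtoC (INR (fact (length I)))))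
        (pow_n (Cminus (expi (om * (t - a))) (RtoC 1)) (length I)).
Proof.
  intros Hg Ht; unfold signature.
  rewrite (sig_rev_rotation g a om c); [| intros i Hi; apply Hg, in_rev, Hi | exact Ht].
  now rewrite length_rev, map_rev, fold_right_Cmult_rev, Cmult_1_l.
Qed.

Lemma is_derive_affine (f : R -> R) (a c : R) :
  (forall x, a <= x -> is_derive f x c) -> forall t, a <= t -> f t = f a + c * (t - a).
Proof.
  intros Hf t Ht.
  destruct (MVT_gen f a t (fun _ => c)) as [x [_ Hx]]; [| | lra].
  - intros x Hx; apply Hf; rewrite Rmin_left in Hx; lra.
  - intros x Hx; apply continuity_pt_filterlim.
    apply (ex_derive_continuous (K := R_AbsRing) (V := R_NormedModule)).
    exists c; apply Hf; rewrite Rmin_left in Hx; lra.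
Qed.

Section SynchronizedKuramoto.

Variables (N : nat) (Cm : nat -> nat -> R) (w : nat -> R) (theta : nat -> R -> R).
Variables (tSS omega : R).
Hypothesis Hsol : kuramoto_solution N Cm w theta.
Hypothesis Hsync : sync_by N theta tSS.
Hypothesis Homega : forall i, (i < N)%nat -> Derive (theta i) tSS = omega.

Lemma kuramoto_Derive i t : (i < N)%nat ->
  Derive (theta i) t = w i + sum_f_R0 (fun j => Cm i j * sin (theta j t - theta i t)) (pred N).
Proof. intro Hi; apply is_derive_unique, Hsol, Hi. Qed.

Lemma kuramoto_phase_locked i j t : (i < N)%nat -> (j < N)%nat -> tSS <= t ->
  theta j t - theta i t = theta j tSS - theta i tSS.
Proof.
  intros Hi Hj Ht.
  rewrite (is_derive_affine (fun s => theta j s - theta i s) tSS 0); [lra | | exact Ht].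
  intros x Hx; eapply is_derive_eq.
  - apply (is_derive_minus (K := R_AbsRing) (V := R_NormedModule)); apply Hsol; assumption.
  - rewrite <- !kuramoto_Derive by assumption.
    unfold minus, plus, opp; simpl; rewrite (Hsync j i x) by assumption; ring.
Qed.

Lemma kuramoto_sync_Derive i t : (i < N)%nat -> tSS <= t -> Derive (theta i) t = omega.
Proof.
  intros Hi Ht; rewrite <- (Homega i Hi), !kuramoto_Derive by assumption.
  f_equal; apply sum_eq; intros j Hj.
  rewrite kuramoto_phase_locked by (lia || lra); reflexivity.
Qed.

Lemma kuramoto_sync_is_derive i t : (i < N)%nat -> tSS <= t -> is_derive (theta i) t omega.
Proof.
  intros Hi Ht; rewrite <- (kuramoto_sync_Derive i t Hi Ht).
  apply Derive_correct; eexists; apply Hsol, Hi.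
Qed.

Lemma Cderiv_expi_path_sync i s : (i < N)%nat -> tSS <= s ->
  Cderiv (expi_path theta i) s =
  Cmult (expi (theta i tSS)) (Cmult ((0, omega) : C) (expi (omega * (s - tSS)))).
Proof.
  intros Hi Hs; unfold expi_path.
  rewrite (is_derive_C_unique _ _ _
             (is_derive_C_expi _ _ _ (kuramoto_sync_is_derive i s Hi Hs))).
  rewrite (is_derive_affine (theta i) tSS omega) by (auto using kuramoto_sync_is_derive).
  rewrite expi_plus, !Cmult_assoc, (Cmult_comm (0, omega)); reflexivity.
Qed.

End SynchronizedKuramoto.

Theorem lemma18 (N : nat) (Cm : nat -> nat -> R) (w : nat -> R)
  (theta : nat -> R -> R) (tSS omega : R) :
  kuramoto_solution N Cm w theta ->
  sync_by N theta tSS ->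
  (forall i, (i < N)%nat -> Derive (theta i) tSS = omega) ->
  forall T : R, 0 < T ->
  (forall I : list nat, (1 <= length I)%nat ->
     List.Forall (fun i => (i < N)%nat) I ->
     sig_SS (expi_path theta) tSS T I =
     Cmult (Cdiv (lambdaI (fun i => theta i tSS) I) (RtoC (INR (fact (length I)))))
           (pow_n (Cminus (expi (omega * T)) (RtoC 1)) (length I)))
  /\
  (forall i j, (i < N)%nat -> (j < N)%nat ->
     lead_SS (expi_path theta) tSS T i j = RtoC 0).
Proof.
  intros Hsol Hsync Homega T HT.
  pose (c i := expi (theta i tSS)).
  assert (Hsig : forall I, List.Forall (fun i => (i < N)%nat) I ->
            signature (expi_path theta) tSS (tSS + T) I =
            Cmult (Cdiv (fold_right Cmult (RtoC 1) (map c I)) (RtoC (INR (fact (length I)))))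
                  (pow_n (Cminus (expi (omega * T)) (RtoC 1)) (length I))).
  { intros I HI; rewrite (signature_rotation _ tSS omega c); [| | lra].
    - now replace (omega * (tSS + T - tSS)) with (omega * T) by ring.
    - intros i Hi s Hs; rewrite Forall_forall in HI.
      apply (Cderiv_expi_path_sync N Cm w); auto. }
  split.
  - intros I _ HI; unfold sig_SS; rewrite Hsig by exact HI.
    unfold lambdaI; now rewrite expi_fold_sum.
  - intros i j Hi Hj; unfold lead_SS, lead.
    rewrite !Hsig by (repeat constructor; assumption).
    cbn [map fold_right length]; field; apply RtoC_INR_neq0, fact_neq_0.
Qed.
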